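(* In every dynamic network congestion game, every blind Nash equilibrium is a Nash equilibrium (i.e., no player can decrease their cost by deviating to an arbitrary, not necessarily blind, strategy).
   Context: Let $\mathcal F$ be the set of non-decreasing piecewise-affine functions $\mathbb N\to\mathbb N$ with finitely many pieces. An arena is $\mathcal A=(V,E,\mathsf{src},\mathsf{tgt})$ with $V$ finite, $E$ a partial function $V\times V\to\mathcal F$ (edge $e=(v,\ell_e,v')$ has cost function $\ell_e$); $\mathsf{tgt}$ has only a self-loop of constant cost $0$ and is reachable from every state. A dynamic NCG $(\mathcal A,n)$ has players $[n]=\{1,\dots,n\}$, all starting in $\mathsf{src}$. In each step each player $i$ simultaneously picks an edge $e_i$ leaving their current state, moves along it, and pays $\ell_{e_i}(u_i)$, $u_i$ being the number of players choosing edge $e_i$ in that step. A strategy for player $i$ maps each finite history (sequence of configurations $[n]\to V$ and steps from the initial configuration) to an edge leaving player $i$'s current state; $\mathrm{cost}_i(\sigma)$ is player $i$'s total payment along the outcome of profile $\sigma$ until reaching $\mathsf{tgt}$ ($+\infty$ if never). $\sigma$ is a Nash equilibrium if for every $k$, $\mathrm{cost}_k(\sigma)=\inf_{\sigma'_k}\mathrm{cost}_k(\langle\sigma_{-k},\sigma'_k\rangle)$ over all strategies $\sigma'_k$, where $\langle\sigma_{-k},\sigma'_k\rangle$ replaces $\sigma_k$ by $\sigma'_k$. A strategy is blind if it depends only on the sequence of states visited by the player itself (it follows a fixed path in $\mathcal A$). A blind Nash equilibrium is a profile of blind strategies in which no player can decrease their cost by switching to another blind strategy. *)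

From mathcomp Require Import all_boot all_order all_algebra.
From Stdlib Require Import ClassicalEpsilon.
Set Implicit Arguments. Unset Strict Implicit. Unset Printing Implicit Defensive.
Import GRing.Theory Num.Theory.

(* f : N -> N is piecewise affine with finitely many pieces:
   breakpoints bs = [b_1 < ... < b_m] (all > 0 w.l.o.g. not required), pieces
   [0,b_1), [b_1,b_2), ..., [b_m, oo); on piece j, f x = a_j x + c_j
   with rational coefficients (a_j, c_j) = coef`_j. *)
Definition piecewise_affine (f : nat -> nat) : Prop :=
  exists (bs : seq nat) (coef : seq (rat * rat)),
    size coef = (size bs).+1 /\ sorted ltn bs /\
    forall x : nat,
      (let j := count (fun b : nat => leq b x) bs in
      ((f x)%:R : rat) = (nth (0, 0) coef j).1 * x%:R + (nth (0, 0) coef j).2)%R.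

Definition in_F (f : nat -> nat) : Prop :=
  {homo f : x y / x <= y} /\ piecewise_affine f.

Record arena (V : finType) := Arena {
  edge : V -> V -> option (nat -> nat);
  src : V;
  tgt : V;
  edge_in_F : forall v w f, edge v w = Some f -> in_F f;
  tgt_only_loop : forall w, w != tgt -> edge tgt w = None;
  tgt_loop : edge tgt tgt = Some (fun _ => 0);
  tgt_reachable : forall v, connect (fun x y => isSome (edge x y)) v tgt
}.

Section Game.
Variables (V : finType) (A : arena V) (n : nat).

Definition config := 'I_n -> V.
Definition init_config : config := fun _ => src A.
(* a history is the list of configurations c_0 (= init_config), ..., c_t;
   steps are determined by consecutive configurations, since an edge is
   determined by its endpoints. *)
Definition history := seq config.
Definition current (h : history) : config := last init_config h.

(* a strategy maps a history to the next state (= the edge taken) *)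
Definition strategy := history -> V.
Definition profile := 'I_n -> strategy.

Definition valid_strategy (i : 'I_n) (s : strategy) : Prop :=
  forall h : history, isSome (edge A (current h i) (s h)).

Definition valid_profile (sigma : profile) : Prop :=
  forall i, valid_strategy i (sigma i).

Definition blind (i : 'I_n) (s : strategy) : Prop :=
  forall h h' : history,
    map (fun c => c i) h = map (fun c => c i) h' -> s h = s h'.

Fixpoint hist (sigma : profile) (t : nat) : history :=
  match t with
  | 0 => [:: init_config]
  | t'.+1 => let h := hist sigma t' in rcons h (fun i => sigma i h)
  end.

Definition outcome (sigma : profile) (t : nat) : config :=
  current (hist sigma t).

Definition load (sigma : profile) (t : nat) (i : 'I_n) : nat :=
  #|[set j | (outcome sigma t j == outcome sigma t i)
          && (outcome sigma t.+1 j == outcome sigma t.+1 i)]|.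

Definition step_cost (sigma : profile) (t : nat) (i : 'I_n) : nat :=
  match edge A (outcome sigma t i) (outcome sigma t.+1 i) with
  | Some f => f (load sigma t i)
  | None => 0
  end.

Definition paid (sigma : profile) (i : 'I_n) (T : nat) : nat :=
  \sum_(t < T) step_cost sigma t i.

(* cost: total payment until reaching tgt; None stands for +infinity *)
Definition cost (sigma : profile) (i : 'I_n) : option nat :=
  match excluded_middle_informative
          (exists t, outcome sigma t i == tgt A) with
  | left H => Some (paid sigma i (ex_minn H))
  | right _ => None
  end.

Definition cost_le (a b : option nat) : bool :=
  match a, b with
  | _, None => true
  | None, Some _ => false
  | Some x, Some y => x <= y
  end.

Definition deviate (sigma : profile) (k : 'I_n) (s : strategy) : profile :=
  fun j => if j == k then s else sigma j.

(* Nash equilibrium: cost_k(sigma) = inf over all (valid) sigma'_k of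
   cost_k(<sigma_-k, sigma'_k>); since N u {+oo} is well-ordered and
   sigma_k is itself a candidate, this is: no deviation is cheaper. *)
Definition nash_equilibrium (sigma : profile) : Prop :=
  valid_profile sigma /\
  forall (k : 'I_n) (s : strategy), valid_strategy k s ->
    cost_le (cost sigma k) (cost (deviate sigma k s) k).

Definition blind_nash_equilibrium (sigma : profile) : Prop :=
  valid_profile sigma /\ (forall i, blind i (sigma i)) /\
  forall (k : 'I_n) (s : strategy), valid_strategy k s -> blind k s ->
    cost_le (cost sigma k) (cost (deviate sigma k s) k).

End Game.

(** Strategies are deterministic, so a deviation [s] of player [k] from any
    profile produces a single play.  Player [k] can reproduce that play
    blindly: after having visited the states [v_0 ... v_t], it moves to the
    next state of the play whenever [v_0 ... v_t] is the beginning of its own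
    path in the play, and to an arbitrary successor otherwise.  The profile
    with this blind strategy has the same history, hence the same cost, so a
    blind deviation is as good as any deviation. *)

From mathcomp Require Import all_boot all_order all_algebra.
From Stdlib Require Import FunctionalExtensionality.

Set Implicit Arguments.
Unset Strict Implicit.
Unset Printing Implicit Defensive.

Section Replay.
Variables (V : finType) (A : arena V) (n : nat).

Lemma exists_edge_from (v : V) : exists w, isSome (edge A v w).
Proof.
have [->|v_ntgt] := eqVneq v (tgt A).
  by exists (tgt A); rewrite tgt_loop.
have /connectP [[|w p] /= path_p last_p] := tgt_reachable A v.
  by rewrite last_p eqxx in v_ntgt.
by case/andP: path_p => vw _; exists w.
Qed.

Definition succ (v : V) : V := odflt v [pick w | isSome (edge A v w)].

Lemma succP (v : V) : isSome (edge A v (succ v)).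
Proof.
rewrite /succ; case: pickP => [w //|no_edge] /=.
by have [w] := exists_edge_from v; rewrite no_edge.
Qed.

Definition trace (k : 'I_n) (h : history V n) : seq V := map (fun c => c k) h.

Lemma last_trace (k : 'I_n) (h : history V n) :
  last (src A) (trace k h) = current A h k.
Proof.
rewrite /current; elim/last_ind: h => //= h c _.
by rewrite /trace map_rcons !last_rcons.
Qed.

Lemma size_hist (tau : profile V n) (t : nat) : size (hist A tau t) = t.+1.
Proof. by elim: t => //= t IHt; rewrite size_rcons IHt. Qed.

Lemma outcome_succ (tau : profile V n) (t : nat) (i : 'I_n) :
  outcome A tau t.+1 i = tau i (hist A tau t).
Proof. by rewrite /outcome /current /= last_rcons. Qed.

Lemma cost_eq_of_hist (tau tau' : profile V n) (i : 'I_n) :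
  hist A tau =1 hist A tau' -> cost A tau i = cost A tau' i.
Proof.
move=> eq_hist; have eq_outcome : outcome A tau = outcome A tau'.
  by apply: functional_extensionality => t; rewrite /outcome eq_hist.
by rewrite /cost /paid /step_cost /load eq_outcome.
Qed.

Lemma deviate_deviate (tau : profile V n) (k : 'I_n) (s s' : strategy V n) :
  deviate (deviate tau k s) k s' = deviate tau k s'.
Proof.
apply: functional_extensionality => j.
by rewrite /deviate; case: (j == k).
Qed.

Variables (tau : profile V n) (k : 'I_n).

(* A history of length [t.+1] ends at time [t]. *)
Definition replay : strategy V n := fun h =>
  let p := trace k h in
  if p == trace k (hist A tau (size p).-1) then outcome A tau (size p) k
  else succ (last (src A) p).

Lemma replay_blind : blind k replay.
Proof. by move=> h h' eq_trace; rewrite /replay /trace eq_trace. Qed.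

Lemma replay_hist (t : nat) : replay (hist A tau t) = tau k (hist A tau t).
Proof. by rewrite /replay size_map size_hist eqxx outcome_succ. Qed.

Lemma replay_valid : valid_strategy A k (tau k) -> valid_strategy A k replay.
Proof.
move=> tau_valid h; rewrite /replay -/(trace k h).
case: ifP => [/eqP on_play|_]; last by rewrite last_trace succP.
set t := (size (trace k h)).-1 in on_play *.
have -> : size (trace k h) = t.+1 by rewrite on_play size_map size_hist.
have -> : current A h k = current A (hist A tau t) k.
  by rewrite -!last_trace on_play.
by rewrite outcome_succ; apply: tau_valid.
Qed.

Lemma hist_replay : hist A (deviate tau k replay) =1 hist A tau.
Proof.
elim=> //= t IHt; rewrite IHt; congr rcons.
apply: functional_extensionality => j; rewrite /deviate.
by have [->|//] := eqVneq j k; rewrite replay_hist.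
Qed.

End Replay.

Theorem mainTheorem3 (V : finType) (A : arena V) (n : nat) (sigma : profile V n) :
  blind_nash_equilibrium A sigma -> nash_equilibrium A sigma.
Proof.
case=> sigma_valid [_ no_blind_deviation]; split=> // k s s_valid.
set tau := deviate sigma k s.
have tau_k : tau k = s by rewrite /tau /deviate eqxx.
have <- : cost A (deviate sigma k (replay A tau k)) k = cost A tau k.
  by rewrite -(deviate_deviate _ _ s); apply/cost_eq_of_hist/hist_replay.
apply: no_blind_deviation; last exact: replay_blind.
by apply: replay_valid; rewrite tau_k.
Qed.
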